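(* Let $G$ be a graph, let $V(G)=V_1\cup V_2$ be a partition of its vertex set, and let $X\subseteq V_1$ be the vertex boundary of $V_2$ in $G$. Let $H$ be a connected graph with $|H|\ge|V_2|$ and let $G':=(G[V_1],X)\vee H$. Let $M\in S(G)$ and let $\sigma'$ be a multiset of $|H|-|V_2|$ real numbers such that the multiset $\sigma(M[V_2])\cup\sigma'$ is generically realisable for $H$. Then there exists $N\in S(G')$ with spectrum $\sigma(N)=\sigma(M)\cup\sigma'$ (union of multisets).
   Context: $S(G)$ is the set of real symmetric matrices indexed by $V(G)$ whose $(i,j)$ off-diagonal entry is nonzero iff $\{i,j\}\in E(G)$ (diagonal unrestricted). $G[W]$ is the subgraph induced on $W$ and $M[W]$ the principal submatrix of $M$ with rows and columns in $W$; $\sigma(\cdot)$ is the spectrum as a multiset. The vertex boundary of $W\subseteq V(G)$ is the set of vertices in $V(G)\setminus W$ adjacent in $G$ to some vertex of $W$. For disjoint graphs $G_1,G_2$ and $U_1\subseteq V(G_1)$, the partial join $(G_1,U_1)\vee G_2$ is $G_1\cup G_2$ together with all edges joining each vertex of $U_1$ to each vertex of $G_2$. For a connected graph $H$ of order $n$, a multiset $\sigma$ of $n$ reals is generically realisable for $H$ if for every finite set $\mathcal Y\subseteq\mathbb{R}^n\setminus\{\mathbf 0\}$ there is a real orthogonal matrix $U$ with $UDU^\top\in S(H)$, $D$ a fixed diagonal matrix with spectrum $\sigma$, such that $U\mathbf y$ has no zero entry for all $\mathbf y\in\mathcal Y$. *)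

From mathcomp Require Import all_boot all_order all_algebra.
From mathcomp Require Import reals.
Set Implicit Arguments. Unset Strict Implicit. Unset Printing Implicit Defensive.
Import Order.TTheory GRing.Theory Num.Theory.
Local Open Scope ring_scope.

Definition simple_graph n (e : rel 'I_n) : Prop :=
  symmetric e /\ irreflexive e.

Definition connected_graph n (e : rel 'I_n) : Prop :=
  forall x y : 'I_n, connect e x y.

Definition in_S (R : realType) n (e : rel 'I_n) (A : 'M[R]_n) : Prop :=
  A^T = A /\ forall i j : 'I_n, i != j -> (A i j != 0) = e i j.

(* Principal submatrix M[W], rows/columns indexed by the elements of W
   (in the enumeration order of W; the spectrum does not depend on it). *)
Definition principal_sub (R : realType) n (M : 'M[R]_n) (W : {set 'I_n}) :
  'M[R]_#|W| := \matrix_(i, j) M (enum_val i) (enum_val j).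

Definition has_spectrum (R : realType) n (A : 'M[R]_n) (s : seq R) : Prop :=
  char_poly A = \prod_(x <- s) ('X - x%:P).

Definition vertex_boundary n (e : rel 'I_n) (W : {set 'I_n}) : {set 'I_n} :=
  [set x | (x \notin W) && [exists y, (y \in W) && e x y]].

(* Partial join (G[V1], X) \/ H, with V1 (k := #|V1| vertices) listed first
   (via enum_val) and the m vertices of H afterwards. *)
Definition partial_join n (e : rel 'I_n) (V1 X : {set 'I_n}) m (h : rel 'I_m) :
  rel 'I_(#|V1| + m) :=
  fun a b =>
    match split a, split b with
    | inl i, inl j => e (enum_val i) (enum_val j)
    | inr a', inr b' => h a' b'
    | inl i, inr _ => enum_val i \in X
    | inr _, inl j => enum_val j \in X
    end.

Arguments partial_join [n] e V1 X [m] h _ _.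

Definition orthogonal_mx (R : realType) m (U : 'M[R]_m) : Prop :=
  U *m U^T = 1%:M.

Definition generically_realisable (R : realType) m (h : rel 'I_m) (s : seq R)
  : Prop :=
  size s = m /\
  forall Y : seq 'cV[R]_m, all (fun y => y != 0) Y ->
    exists U : 'M[R]_m,
      [/\ orthogonal_mx U,
          in_S h (U *m diag_mx (\row_(i < m) s`_i) *m U^T) &
          forall y, y \in Y -> forall i : 'I_m, (U *m y) i 0 != 0].

From mathcomp Require Import all_boot all_order all_algebra.
From mathcomp Require Import reals.
From mathcomp Require Import ring.
Import Order.TTheory GRing.Theory Num.Theory.
Local Open Scope ring_scope.
Set Implicit Arguments. Unset Strict Implicit. Unset Printing Implicit Defensive.

(* List the vertices as V1 followed by V2, so that M becomes the block
   matrix [A B; B^T C] with C = M[V2].  By the real spectral theorem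
   (proved here by Householder deflation) Q^T C Q = diag s for an orthogonal
   Q.  Generic realisability of s ++ sigma' for H gives an orthogonal U with
   U diag(s ++ sigma') U^T in S(H) that maps every nonzero column of
   Z = col_mx (Q^T B^T) 0 to a vector without zero entries.  Then
       N = [A, (U Z)^T; U Z, U (Q^T C Q (+) diag sigma') U^T]
   is orthogonally similar to M (+) diag sigma', which gives its spectrum,
   and column a of U Z is nonzero everywhere iff row a of B is nonzero,
   i.e. iff vertex a lies on the vertex boundary of V2, which gives its
   pattern. *)

Section BlockMatrices.
Variable R : comUnitRingType.

Lemma char_poly_conj_orth n (P A : 'M[R]_n) : P *m P^T = 1%:M ->
  char_poly (P *m A *m P^T) = char_poly A.
Proof.
move=> PPt; rewrite /char_poly /char_poly_mx.
have -> : 'X%:M - map_mx polyC (P *m A *m P^T) =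
    map_mx polyC P *m ('X%:M - map_mx polyC A) *m map_mx polyC P^T.
  rewrite mulmxBr mulmxBl !map_mxM; congr (_ - _).
  by rewrite mul_mx_scalar -scalemxAl -map_mxM PPt map_mx1 scalemx1.
rewrite !det_mulmx mulrC mulrA -!det_mulmx -map_mxM (mulmx1C PPt).
by rewrite map_mx1 mul1mx.
Qed.

Lemma orthogonal_mul n (P Q : 'M[R]_n) :
  P *m P^T = 1%:M -> Q *m Q^T = 1%:M -> (P *m Q) *m (P *m Q)^T = 1%:M.
Proof.
by move=> PPt QQt; rewrite trmx_mul mulmxA -(mulmxA P) QQt mulmx1.
Qed.

Lemma orthogonal_block n1 n2 (P : 'M[R]_n1) (Q : 'M[R]_n2) :
  P *m P^T = 1%:M -> Q *m Q^T = 1%:M ->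
  block_mx P 0 0 Q *m (block_mx P 0 0 Q)^T = 1%:M.
Proof.
move=> PPt QQt; rewrite tr_block_mx !trmx0 mulmx_block !mulmx0 !mul0mx.
by rewrite !addr0 !add0r PPt QQt -scalar_mx_block.
Qed.

(* Permuting rows and columns simultaneously is a conjugation by a
   permutation matrix, an orthogonal matrix. *)
Lemma char_poly_reindex p n (f : 'I_p -> 'I_n) (A : 'M[R]_n) :
  p = n -> injective f ->
  char_poly (\matrix_(i, j) A (f i) (f j)) = char_poly A.
Proof.
move=> pn finj; subst p; pose P : 'M[R]_n := \matrix_(i, j) (f i == j)%:R.
have pick_f (i : 'I_n) (g : 'I_n -> R) : \sum_k (f i == k)%:R * g k = g (f i).
  rewrite (bigD1 (f i)) //= eqxx mul1r big1 ?addr0 // => k /negbTE.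
  by rewrite eq_sym => ->; rewrite mul0r.
have PA (B : 'M[R]_n) : P *m B = \matrix_(i, j) B (f i) j.
  by apply/matrixP => i j; rewrite !mxE; under eq_bigr do rewrite mxE; rewrite pick_f.
have AP (B : 'M[R]_n) : B *m P^T = \matrix_(i, j) B i (f j).
  apply/matrixP => i j; rewrite !mxE.
  by under eq_bigr do rewrite !mxE mulrC; rewrite pick_f.
have PPt : P *m P^T = 1%:M.
  by rewrite AP; apply/matrixP => i j; rewrite !mxE (inj_eq finj).
rewrite -(char_poly_conj_orth A PPt) AP PA; congr char_poly.
by apply/matrixP => i j; rewrite !mxE.
Qed.

Lemma char_poly_block_diag n1 n2 (A : 'M[R]_n1) (B : 'M[R]_n2) :
  char_poly (block_mx A 0 0 B) = char_poly A * char_poly B.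
Proof.
rewrite /char_poly /char_poly_mx map_block_mx !map_mx0 (scalar_mx_block n1 n2).
by rewrite opp_block_mx add_block_mx !oppr0 !addr0 det_ublock.
Qed.

Lemma char_poly_castmx p q (E : p = q) (A : 'M[R]_p) :
  char_poly (castmx (E, E) A) = char_poly A.
Proof. by case: q / E; rewrite castmx_id. Qed.

Lemma char_poly_diag_seq k (s : seq R) : size s = k ->
  char_poly (diag_mx (\row_(i < k) s`_i)) = \prod_(x <- s) ('X - x%:P).
Proof.
move=> sk; rewrite char_poly_trig ?diag_mx_is_trig // (big_nth 0) big_mkord sk.
by apply: eq_bigr => i _; rewrite !mxE eqxx mulr1n.
Qed.

Lemma diag_mx_cat k (s t : seq R) l : size s = k ->
  diag_mx (\row_(i < k + l) (s ++ t)`_i) =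
  block_mx (diag_mx (\row_(i < k) s`_i)) 0 0 (diag_mx (\row_(i < l) t`_i)).
Proof.
move=> sk; rewrite -diag_mx_row; congr diag_mx; apply/rowP => j; rewrite !mxE.
case: splitP => j' ->; rewrite mxE nth_cat sk ?ltn_ord //.
by rewrite ltnNge leq_addr /= addKn.
Qed.

Lemma diag_mx_seq1 (x : R) : diag_mx (\row_(i < 1) [:: x]`_i) = x%:M.
Proof. by apply/matrixP => i j; rewrite !ord1 !mxE. Qed.

Lemma char_poly_scalar1 (x : R) : char_poly (x%:M : 'M[R]_1) = 'X - x%:P.
Proof. by rewrite -diag_mx_seq1 char_poly_diag_seq // big_seq1. Qed.

Lemma symmetric_blockE n1 n2 (M : 'M[R]_(n1 + n2)) : M^T = M ->
  [/\ M = block_mx (ulsubmx M) (ursubmx M) (ursubmx M)^T (drsubmx M),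
      (ulsubmx M)^T = ulsubmx M & (drsubmx M)^T = drsubmx M].
Proof.
move=> MT; have : (block_mx (ulsubmx M) (ursubmx M) (dlsubmx M) (drsubmx M))^T
    = block_mx (ulsubmx M) (ursubmx M) (dlsubmx M) (drsubmx M) by rewrite submxK.
by rewrite tr_block_mx => /eq_block_mx [-> _ -> ->]; rewrite submxK.
Qed.

(* The matrix N of the theorem: the V1-block A is kept, the V2-block is
   replaced by U (Q^T C Q (+) E) U^T, and the coupling B is transported
   along the same orthogonal change of basis. *)
Definition extension_mx k1 k2 l (A : 'M[R]_k1) (B : 'M[R]_(k1, k2))
    (C : 'M[R]_k2) (E : 'M[R]_l) (Q : 'M[R]_k2) (U : 'M[R]_(k2 + l)) :
    'M[R]_(k1 + (k2 + l)) :=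
  block_mx A (U *m col_mx (Q^T *m B^T) 0)^T (U *m col_mx (Q^T *m B^T) 0)
    (U *m block_mx (Q^T *m C *m Q) 0 0 E *m U^T).

(* N is orthogonally similar to (block_mx A B B^T C) (+) E, hence has the
   spectrum of the original matrix together with that of E. *)
Lemma char_poly_extension_mx k1 k2 l (A : 'M[R]_k1) (B : 'M[R]_(k1, k2))
    (C : 'M[R]_k2) (E : 'M[R]_l) (Q : 'M[R]_k2) (U : 'M[R]_(k2 + l)) :
  Q *m Q^T = 1%:M -> U *m U^T = 1%:M ->
  char_poly (extension_mx A B C E Q U) =
  char_poly (block_mx A B B^T C) * char_poly E.
Proof.
move=> QQt UUt; pose W := U *m block_mx Q^T 0 0 1%:M.
pose O : 'M[R]_(k1 + (k2 + l)) := block_mx 1%:M 0 0 W.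
pose L := block_mx A (row_mx B 0) (col_mx B^T 0) (block_mx C 0 0 E).
have WB : W *m col_mx B^T 0 = U *m col_mx (Q^T *m B^T) 0.
  by rewrite -mulmxA mul_block_col !mul0mx !mul1mx !addr0.
have WLW : W *m block_mx C 0 0 E *m W^T =
    U *m block_mx (Q^T *m C *m Q) 0 0 E *m U^T.
  have -> : block_mx (Q^T *m C *m Q) 0 0 E =
      block_mx Q^T 0 0 1%:M *m block_mx C 0 0 E *m block_mx Q 0 0 1%:M.
    by rewrite !mulmx_block !mulmx0 !mul0mx !mulmx1 !mul1mx !addr0 !add0r mul0mx.
  by rewrite /W trmx_mul tr_block_mx !trmx0 trmx1 trmxK !mulmxA.
have OO : O *m O^T = 1%:M.
  apply: orthogonal_block; first by rewrite trmx1 mulmx1.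
  apply: orthogonal_mul UUt _; apply: orthogonal_block; last by rewrite trmx1 mulmx1.
  by rewrite trmxK mulmx1C.
have -> : extension_mx A B C E Q U = O *m L *m O^T.
  rewrite /O /L tr_block_mx !trmx0 trmx1 !mulmx_block !mulmx0 !mul0mx !mulmx1.
  rewrite !mul1mx !addr0 !add0r WB -[_ *m W^T]trmxK trmx_mul trmxK tr_row_mx.
  by rewrite trmx0 -WB WLW /extension_mx WB.
rewrite char_poly_conj_orth // /L block_mxA char_poly_castmx col_mx0 row_mx0.
by rewrite char_poly_block_diag.
Qed.

(* Column a of the transported coupling vanishes exactly when row a of B
   does, since Q^T is injective. *)
Lemma col_transport_eq0 k1 k2 l (Q : 'M[R]_k2) (B : 'M[R]_(k1, k2)) a :
  Q *m Q^T = 1%:M ->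
  (col a (col_mx (Q^T *m B^T) (0 : 'M[R]_(l, k1))) == 0) = (row a B == 0).
Proof.
move=> QQt; rewrite col_col_mx col0 col_mx_eq0 eqxx andbT colE -mulmxA -colE.
rewrite -tr_row -[row a B == 0]trmx_eq0.
apply/eqP/eqP => [QBa|->]; last by rewrite mulmx0.
by rewrite -[(row a B)^T]mul1mx -QQt -mulmxA QBa mulmx0.
Qed.

Lemma mulmx_col_support k p q (U : 'M[R]_(k, q)) (Z : 'M[R]_(q, p)) :
  (forall a, col a Z != 0 -> forall b, (U *m col a Z) b 0 != 0) ->
  forall b a, ((U *m Z) b a != 0) = (col a Z != 0).
Proof.
move=> Ugen b a.
have -> : (U *m Z) b a = (U *m col a Z) b 0 by rewrite colE mulmxA -colE [RHS]mxE.
have [->|Za] := eqVneq (col a Z) 0; first by rewrite mulmx0 mxE eqxx.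
exact: Ugen.
Qed.

Lemma symmetric_block_deflate k (x : R) (C : 'M[R]_(1 + k)) :
  C^T = C -> row 0 C = x *: row 0 1%:M ->
  C = block_mx x%:M 0 0 (drsubmx C).
Proof.
move=> /symmetric_blockE [CE _ _] row0C.
have : usubmx C = row_mx x%:M 0.
  have usub0 (D : 'M[R]_(1 + k)) : usubmx D = row 0 D.
    by apply/rowP => j; rewrite !mxE; congr (D _ j); apply/val_inj.
  rewrite usub0 row0C -usub0 (scalar_mx_block 1 k) block_mxEv col_mxKu.
  apply/rowP => j; rewrite !mxE; case: splitP => j' _; by rewrite !mxE ?mulr0 ?mulr_natr.
rewrite -[usubmx C]hsubmxK => /eq_row_mx [ulC urC].
by rewrite {1}CE -[ulsubmx C]/(lsubmx _) -[ursubmx C]/(rsubmx _) ulC urC trmx0.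
Qed.

End BlockMatrices.

Section Householder.
Variable R : realFieldType.

Lemma dotmx_self_gt0 k (v : 'rV[R]_k) : v != 0 -> 0 < (v *m v^T) 0 0.
Proof.
move=> vn0; rewrite mxE.
have [j vj] : exists j, v 0 j != 0.
  apply/existsP; apply: contraR vn0 => /existsPn vz; apply/eqP/rowP => j.
  by rewrite mxE; move: (vz j); rewrite negbK => /eqP.
rewrite (bigD1 j) //= mxE -expr2 ltr_pwDl //.
  by rewrite lt0r sqr_ge0 andbT sqrf_eq0.
by apply: sumr_ge0 => i _; rewrite mxE -expr2 sqr_ge0.
Qed.

(* Any unit vector u is the first row of a symmetric orthogonal matrix: the
   reflection exchanging e_0 and u. *)
Lemma householder k (u : 'rV[R]_k.+1) : (u *m u^T) 0 0 = 1 ->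
  exists H : 'M[R]_k.+1, [/\ H^T = H, H *m H = 1%:M & row 0 H = u].
Proof.
move=> uu; pose e0 : 'rV[R]_k.+1 := delta_mx 0 0.
have e0_mul p (A : 'M[R]_(k.+1, p)) : e0 *m A = row 0 A by rewrite -rowE.
have [->|une] := eqVneq u e0.
  by exists 1%:M; rewrite trmx1 mul1mx -e0_mul mulmx1.
pose w := u - e0; pose q := (w *m w^T) 0 0.
have e0u : (e0 *m u^T) 0 0 = u 0 0 by rewrite e0_mul !mxE.
have e0e0 : (e0 *m e0^T) 0 0 = 1 by rewrite e0_mul !mxE eqxx.
have ue0 : (u *m e0^T) 0 0 = u 0 0.
  by rewrite -[u *m _]trmxK trmx_mul trmxK e0_mul !mxE.
have e0w : (e0 *m w^T) 0 0 = u 0 0 - 1.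
  by rewrite /w linearB /= mulmxBr -e0u -e0e0 !mxE.
have qE : q = 2 - 2 * u 0 0.
  have subE (A B : 'M[R]_1) : (A - B) 0 0 = A 0 0 - B 0 0 by rewrite !mxE.
  rewrite /q /w linearB /= mulmxBl !mulmxBr !subE uu ue0 e0u e0e0; ring.
have q0 : q != 0 by rewrite gt_eqF // dotmx_self_gt0 // subr_eq0.
pose W := w^T *m w; pose a := 2 / q.
have WW : W *m W = q *: W.
  rewrite /W mulmxA -(mulmxA w^T) (mx11_scalar (w *m w^T)) mul_mx_scalar.
  by rewrite -scalemxAl.
exists (1%:M - a *: W); split.
- by rewrite linearB /= trmx1 linearZ /= /W trmx_mul trmxK.
- rewrite mulmxBl !mulmxBr mul1mx mulmx1 -scalemxAl mul1mx -scalemxAr WW !scalerA.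
  have -> : a * a * q = a + a by rewrite /a; field.
  by rewrite scalerDl opprB addrK subrK.
- rewrite -e0_mul mulmxBr mulmx1 -scalemxAr /W mulmxA.
  rewrite (mx11_scalar (e0 *m w^T)) mul_scalar_mx scalerA e0w.
  have -> : a * (u 0 0 - 1) = -1 by rewrite /a qE; field; rewrite -qE.
  by rewrite scaleN1r opprK /w addrC subrK.
Qed.

End Householder.

Section RealSpectralTheorem.
Variable R : rcfType.

Lemma unit_eigenvector k (C : 'M[R]_k) (x : R) : eigenvalue C x ->
  exists2 u : 'rV[R]_k, (u *m u^T) 0 0 = 1 & u *m C = x *: u.
Proof.
case/eigenvalueP => v vC vn0; have vv0 := dotmx_self_gt0 vn0.
pose r := Num.sqrt ((v *m v^T) 0 0); have r0 : 0 < r by rewrite sqrtr_gt0.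
exists (r^-1 *: v); last by rewrite -scalemxAl vC !scalerA mulrC.
rewrite linearZ /= -scalemxAl -scalemxAr scalerA [LHS]mxE.
rewrite -[X in _ * X](sqr_sqrtr (ltW vv0)) -/r.
by field; rewrite gt_eqF.
Qed.

(* One deflation step: an orthogonal change of basis sending a unit
   eigenvector for x to e_0 splits a symmetric C as x (+) C'. *)
Lemma symmetric_deflation k (C : 'M[R]_(1 + k)) (x : R) :
  C^T = C -> eigenvalue C x ->
  exists2 H : 'M[R]_(1 + k), H *m H^T = 1%:M &
    exists2 C' : 'M[R]_k, C'^T = C' & H^T *m C *m H = block_mx x%:M 0 0 C'.
Proof.
move=> CT /unit_eigenvector [u uu uC].
have [H [HT HH Hrow]] : exists H : 'M[R]_(1 + k),
    [/\ H^T = H, H *m H = 1%:M & row 0 H = u] := householder uu.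
exists H; first by rewrite HT.
have HCHT : (H^T *m C *m H)^T = H^T *m C *m H.
  by rewrite HT !trmx_mul HT CT mulmxA.
exists (drsubmx (H^T *m C *m H)); first by case: (symmetric_blockE HCHT).
apply: symmetric_block_deflate => //.
by rewrite HT !row_mul Hrow uC -scalemxAl -Hrow -row_mul HH.
Qed.

Theorem symmetric_spectral k (C : 'M[R]_k) (s : seq R) : C^T = C ->
  char_poly C = \prod_(x <- s) ('X - x%:P) ->
  exists2 Q : 'M[R]_k, Q *m Q^T = 1%:M & Q^T *m C *m Q = diag_mx (\row_i s`_i).
Proof.
elim: k C s => [|k IH] C s CT cpC.
  by exists 1%:M; rewrite ?trmx1 ?mulmx1 //; apply/matrixP => [[]].
have /eqP : size s = k.+1.
  by move: (size_char_poly C); rewrite cpC size_prod_XsubC => -[].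
case: s cpC => // x s' cpC _.
have Cx : eigenvalue C x.
  by rewrite eigenvalue_root_char cpC root_prod_XsubC mem_head.
have [H HHt [C' C'T HCH]] := symmetric_deflation CT Cx.
have cpC' : char_poly C' = \prod_(y <- s') ('X - y%:P).
  apply: (@mulfI _ ('X - x%:P)); first by rewrite polyXsubC_eq0.
  have HtH : H^T *m H^T^T = 1%:M by rewrite trmxK mulmx1C.
  have := char_poly_conj_orth C HtH; rewrite trmxK HCH cpC big_cons => <-.
  by rewrite -char_poly_scalar1 -char_poly_block_diag.
have [Q' Q'Q Q'C] := IH _ _ C'T cpC'.
pose B : 'M[R]_(1 + k) := block_mx 1%:M 0 0 Q'.
exists (H *m B).
  have BBt : B *m B^T = 1%:M by apply: orthogonal_block; rewrite ?trmx1 ?mulmx1.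
  exact: orthogonal_mul HHt BBt.
have BCB : B^T *m block_mx x%:M 0 0 C' *m B = block_mx x%:M 0 0 (Q'^T *m C' *m Q').
  rewrite /B tr_block_mx !trmx0 trmx1 !mulmx_block !mulmx0 !mul0mx.
  by rewrite !mulmx1 !mul1mx !addr0 !add0r mul0mx.
rewrite trmx_mul !mulmxA -(mulmxA B^T H^T C) -(mulmxA B^T (H^T *m C) H) HCH BCB.
by rewrite Q'C -diag_mx_seq1 -(@diag_mx_cat _ 1 [:: x] s' k).
Qed.

End RealSpectralTheorem.

Lemma split_lshift m n (a : 'I_m) : split (lshift n a) = inl a.
Proof. exact: (unsplitK (inl _ a)). Qed.

Lemma split_rshift m n (b : 'I_n) : split (rshift m b) = inr b.
Proof. exact: (unsplitK (inr _ b)). Qed.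

Lemma in_S_partial_join_block (R : realType) n (e : rel 'I_n)
    (V1 X : {set 'I_n}) m (h : rel 'I_m)
    (A : 'M[R]_#|V1|) (Y : 'M[R]_(m, #|V1|)) (D : 'M[R]_m) :
  A^T = A ->
  (forall a b, a != b -> (A a b != 0) = e (enum_val a) (enum_val b)) ->
  (forall b a, (Y b a != 0) = (enum_val a \in X)) ->
  in_S h D ->
  in_S (partial_join e V1 X h) (block_mx A Y^T Y D).
Proof.
move=> AT Ae YX [DT Dh]; split; first by rewrite tr_block_mx trmxK AT DT.
move=> i j; rewrite /partial_join.
case: split_ordP => a ->; case: split_ordP => b -> ij.
- by rewrite block_mxEul Ae //; apply: contraNneq ij => ->.
- by rewrite block_mxEur mxE YX.
- by rewrite block_mxEdl YX.
- by rewrite block_mxEdr Dh //; apply: contraNneq ij => ->.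
Qed.

Section VertexPartition.
Variables (R : realType) (n : nat) (V1 V2 : {set 'I_n}).
Hypothesis V1V2_disjoint : V1 :&: V2 = set0.

Definition partition_index (a : 'I_(#|V1| + #|V2|)) : 'I_n :=
  match split a with inl i => enum_val i | inr j => enum_val j end.

Definition partition_mx (M : 'M[R]_n) : 'M[R]_(#|V1| + #|V2|) :=
  \matrix_(a, b) M (partition_index a) (partition_index b).

(* Since V1 and V2 are disjoint the listing has no repetition, and since
   they cover all vertices it is a reordering of M. *)
Lemma partition_index_inj : injective partition_index.
Proof.
have disj x : x \in V1 -> x \in V2 -> False.
  by move=> x1 x2; move/setP: V1V2_disjoint => /(_ x); rewrite !inE x1 x2.
move=> a b; rewrite /partition_index.
case: split_ordP => a' ->; case: split_ordP => b' -> E.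
- by rewrite (enum_val_inj E).
- by case: (disj _ (enum_valP a')); rewrite E enum_valP.
- by case: (disj _ (enum_valP b')); rewrite -E enum_valP.
- by rewrite (enum_val_inj E).
Qed.

Lemma char_poly_partition_mx (M : 'M[R]_n) : V1 :|: V2 = [set: 'I_n] ->
  char_poly (partition_mx M) = char_poly M.
Proof.
move=> V1V2_cover; apply: char_poly_reindex partition_index_inj.
by rewrite -cardsUI V1V2_cover V1V2_disjoint cards0 addn0 cardsT card_ord.
Qed.

Lemma partition_mx_sym (M : 'M[R]_n) : M^T = M -> (partition_mx M)^T = partition_mx M.
Proof. by move=> MT; apply/matrixP => a b; rewrite !mxE -[in LHS]MT mxE. Qed.

Lemma partition_mx_ul (M : 'M[R]_n) a b :
  ulsubmx (partition_mx M) a b = M (enum_val a) (enum_val b).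
Proof. by rewrite !mxE /partition_index !split_lshift. Qed.

Lemma partition_mx_ur (M : 'M[R]_n) a j :
  ursubmx (partition_mx M) a j = M (enum_val a) (enum_val j).
Proof. by rewrite !mxE /partition_index split_lshift split_rshift. Qed.

Lemma partition_mx_dr (M : 'M[R]_n) : drsubmx (partition_mx M) = principal_sub M V2.
Proof. by apply/matrixP => i j; rewrite !mxE /partition_index !split_rshift. Qed.

Lemma vertex_boundary_coupling (e : rel 'I_n) (M : 'M[R]_n) a :
  in_S e M ->
  (enum_val a \in vertex_boundary e V2) = (row a (ursubmx (partition_mx M)) != 0).
Proof.
move=> [_ Me]; have aV1 := enum_valP a.
have aV2 : enum_val a \notin V2.
  apply/negP => aV2; move/setP: V1V2_disjoint => /(_ (enum_val a)).
  by rewrite !inE aV1 aV2.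
have ne (y : 'I_n) : y \in V2 -> enum_val a != y.
  by move=> yV2; apply: contraNneq aV2 => ->.
rewrite inE aV2 /=; apply/existsP/idP => [[y /andP [yV2 ay]] | Bna].
  apply/eqP => /rowP /(_ (enum_rank_in yV2 y)).
  rewrite !mxE /partition_index split_lshift split_rshift enum_rankK_in // => Mz.
  by move: ay; rewrite -Me ?ne // Mz eqxx.
have [j Bj] : exists j, ursubmx (partition_mx M) a j != 0.
  apply/existsP; apply: contraR Bna => /existsPn Bz; apply/eqP/rowP => j.
  by move/negPn/eqP: (Bz j) => Bj; rewrite mxE Bj mxE.
by exists (enum_val j); rewrite enum_valP -Me ?ne ?enum_valP // -partition_mx_ur.
Qed.

End VertexPartition.

Theorem lemma3p6 (R : realType) (n : nat) (e : rel 'I_n)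
  (V1 V2 : {set 'I_n}) (m : nat) (h : rel 'I_m)
  (M : 'M[R]_n) (sigma' : seq R) :
  simple_graph e ->
  V1 :&: V2 = set0 -> V1 :|: V2 = [set: 'I_n] ->
  simple_graph h -> connected_graph h ->
  (#|V2| <= m)%N ->
  in_S e M ->
  size sigma' = (m - #|V2|)%N ->
  (exists s : seq R, has_spectrum (principal_sub M V2) s /\
     generically_realisable h (s ++ sigma')) ->
  exists N : 'M[R]_(#|V1| + m),
    in_S (partial_join e V1 (vertex_boundary e V2) h) N /\
    char_poly N = char_poly M * \prod_(x <- sigma') ('X - x%:P).
Proof.
move=> _ V12 V1u _ _ V2m MS ssig [s [cps [Gsz Ggen]]].
have [l Em] : exists l, m = (#|V2| + l)%N by exists (m - #|V2|)%N; rewrite subnKC.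
move: Gsz ssig; subst m => Gsz ssig; rewrite addKn in ssig.
have ss : size s = #|V2|.
  by move: Gsz; rewrite size_cat ssig => /eqP; rewrite eqn_add2r => /eqP.
have [M'E AT CT] := symmetric_blockE (partition_mx_sym V1 V2 MS.1).
set A := ulsubmx _ in M'E AT; set B := ursubmx _ in M'E; set C := drsubmx _ in M'E CT.
have cpC : char_poly C = \prod_(x <- s) ('X - x%:P) by rewrite /C partition_mx_dr.
have [Q QQt QCQ] := symmetric_spectral CT cpC.
(* The test vectors handed to generic realisability: nonzero columns of Z. *)
pose Z := col_mx (Q^T *m B^T) (0 : 'M[R]_(l, #|V1|)).
pose Y := filter (fun v => v != 0) [seq col a Z | a <- enum 'I_#|V1|].
have [U [UUt UD Uy]] := Ggen Y (filter_all _ _).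
exists (extension_mx A B C (diag_mx (\row_(i < l) sigma'`_i)) Q U); split.
  apply: in_S_partial_join_block => //.
  - move=> a b ab; rewrite partition_mx_ul MS.2 //.
    by rewrite (inj_eq enum_val_inj).
  - move=> b a; rewrite (vertex_boundary_coupling V12 _ MS).
    rewrite -(col_transport_eq0 l B a QQt) -/Z.
    apply: mulmx_col_support => {}a Za i; apply: Uy.
    by rewrite mem_filter Za /=; apply: map_f; rewrite mem_enum.
  - by rewrite QCQ -diag_mx_cat.
rewrite char_poly_extension_mx // -M'E char_poly_partition_mx //.
by rewrite char_poly_diag_seq.
Qed.
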